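(* Let $\mathbb T=\mathbb R/\mathbb Z$, $T$ a torus (written additively), $L^2T$ the group of smooth maps $\mathbb T^2\to T$ under pointwise addition, and let $SL_2(\mathbb Z)$ act on $\mathbb T^2=\mathbb R^2/\mathbb Z^2$ by left multiplication. Let $\mathcal G$ be the group with underlying set $SL_2(\mathbb Z)\times\mathbb T^2\times L^2T$ and product \[ (A',t',\gamma'(s))(A,t,\gamma(s))=(A'A,\ A^{-1}t'+t,\ \gamma'(As+t)+\gamma(s)). \] Let $\mathbb T^2\times T\subset\mathcal G$ be the subgroup of elements $(1,r,c_u)$ with $c_u$ the constant loop at $u\in T$, and let $SL_2(\mathbb Z)\ltimes\check T^2\subset\mathcal G$ be the subgroup of elements $(A,0,\gamma)$ with $\gamma\in\mathrm{Hom}(\mathbb T^2,T)\cong\check T^2$ (where $(m_1,m_2)\in\check T^2$ corresponds to $s\mapsto m_1(s_1)+m_2(s_2)$). Then $SL_2(\mathbb Z)\ltimes\check T^2$ is contained in the normaliser $N$ of $\mathbb T^2\times T$ in $\mathcal G$, and the composite $SL_2(\mathbb Z)\ltimes\check T^2\hookrightarrow N\twoheadrightarrow N/(\mathbb T^2\times T)$ is an isomorphism.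
   Context: $\check T=\mathrm{Hom}(\mathbb T,T)$ is the cocharacter lattice of $T$. *)

From HB Require Import structures.
From mathcomp Require Import all_boot all_order all_algebra.
From mathcomp Require Import all_classical all_reals all_analysis.
From mathcomp Require Import lra.
Set Implicit Arguments. Unset Strict Implicit. Unset Printing Implicit Defensive.
Import Order.TTheory GRing.Theory Num.Theory.
Import numFieldNormedType.Exports.
Local Open Scope ring_scope.

Section Defs.
Variable R : realType.

(** The circle 𝕋 = ℝ/ℤ, represented by the canonical representatives in [0,1). *)
Definition circ := {x : R | 0 <= x < 1}.

Definition fracR (x : R) : R := x - (Num.floor x)%:~R.

Lemma fracR_itv (x : R) : 0 <= fracR x < 1.
Proof.
rewrite /fracR; have /andP[h1 h2] := floor_itv x.
rewrite intrD in h2; apply/andP; split; lra.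
Qed.

Definition piC (x : R) : circ := exist _ (fracR x) (fracR_itv x).

Definition cadd (x y : circ) : circ := piC (sval x + sval y).
Definition czero : circ := piC 0.

Definition tor (k : nat) := 'I_k -> circ.
Definition tadd k (x y : tor k) : tor k := fun i => cadd (x i) (y i).
Definition tzero k : tor k := fun _ => czero.
Definition piT k (v : 'rV[R]_k) : tor k := fun i => piC (v 0 i).

Definition actT (A : 'M[int]_2) (s : tor 2) : tor 2 :=
  fun i => piC (\sum_(j < 2) (A i j)%:~R * sval (s j)).

Fixpoint iterD (m k : nat) (vs : seq 'rV[R]_m) (F : 'rV[R]_m -> 'rV[R]_k)
  : 'rV[R]_m -> 'rV[R]_k :=
  match vs with
  | [::] => F
  | v :: vs' => fun x => derive (iterD vs' F) x v
  end.

Definition smoothR (m k : nat) (F : 'rV[R]_m -> 'rV[R]_k) : Prop :=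
  forall vs : seq 'rV[R]_m,
    continuous (iterD vs F) /\ forall x v, derivable (iterD vs F) x v.

Definition smoothT (n : nat) (g : tor 2 -> tor n) : Prop :=
  exists F : 'rV[R]_2 -> 'rV[R]_n, smoothR F /\ forall x, g (piT x) = piT (F x).

(** Carrier of the group 𝒢 = SL_2(ℤ) × 𝕋^2 × L^2 T, with T = 𝕋^n. *)
Definition Gcar (n : nat) := ('M[int]_2 * tor 2 * (tor 2 -> tor n))%type.

Definition inG n (g : Gcar n) : Prop :=
  \det g.1.1 = 1 /\ smoothT g.2.

Definition Gmul n (g' g : Gcar n) : Gcar n :=
  let: (A', t', c') := g' in
  let: (A, t, c) := g in
  (A' *m A, tadd (actT (invmx A) t') t,
   fun s => tadd (c' (tadd (actT A s) t)) (c s)).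

Definition inH n (g : Gcar n) : Prop :=
  exists (r : tor 2) (u : tor n), g = (1%:M, r, fun _ => u).

Definition inK n (g : Gcar n) : Prop :=
  inG g /\ g.1.2 = @tzero 2 /\
  forall s s', g.2 (tadd s s') = tadd (g.2 s) (g.2 s').

Definition inN n (g : Gcar n) : Prop :=
  inG g /\
  (forall h, inH h -> exists h', inH h' /\ Gmul g h = Gmul h' g) /\
  (forall h', inH h' -> exists h, inH h /\ Gmul g h = Gmul h' g).

End Defs.

(** Elements of 𝕋^2 × T act on 𝒢 from the right by translating the loop
    variable and adding a constant.  If g = (A, t, γ) normalises 𝕋^2 × T,
    then for every r the difference γ(s + r) - γ(s) is independent of s, so
    γ - γ(0) is a homomorphism 𝕋^2 → T and g = (A, 0, γ - γ(0)) · (1, t, c)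
    for a constant c.  Conversely (A, 0, γ) with γ a homomorphism normalises
    𝕋^2 × T, and two such elements in the same coset agree because a
    homomorphism vanishes at 0. *)
From Pilot Require Import Defs.
From HB Require Import structures.
From mathcomp Require Import all_boot all_order all_algebra.
From mathcomp Require Import all_classical all_reals all_analysis.
From mathcomp Require Import ring.
Import Order.TTheory GRing.Theory Num.Theory.
Import numFieldNormedType.Exports.
Set Implicit Arguments.
Unset Strict Implicit.
Unset Printing Implicit Defensive.
Local Open Scope ring_scope.

Section CircleGroup.
Variable R : realType.

Lemma fracR_addz (x : R) (m : int) : fracR (x + m%:~R) = fracR x.
Proof. by rewrite /fracR floorDrz ?intr_int // intrKfloor intrD; ring. Qed.

Lemma piC_eq_addz (x y : R) (m : int) : x = y + m%:~R -> piC x = piC y.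
Proof. by move=> ->; apply: val_inj; rewrite /= fracR_addz. Qed.

Lemma fracR_id (x : R) : 0 <= x < 1 -> fracR x = x.
Proof. by move=> x01; rewrite /fracR (@floor_def _ x 0) ?subr0 ?add0r. Qed.

Lemma piC_sval (c : circ R) : piC (sval c) = c.
Proof. by case: c => x x01; apply: val_inj; rewrite /= fracR_id. Qed.

Lemma cadd_piC (a b : R) : Defs.cadd (piC a) (piC b) = piC (a + b).
Proof.
apply: (piC_eq_addz (m := - (Num.floor a + Num.floor b))).
by rewrite /= /fracR intrN intrD; ring.
Qed.

Definition copp (x : circ R) : circ R := piC (- sval x).

Lemma copp_piC (a : R) : copp (piC a) = piC (- a).
Proof. by apply: (piC_eq_addz (m := Num.floor a)); rewrite /= /fracR; ring. Qed.

Lemma caddA : associative (@Defs.cadd R).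
Proof.
by move=> a b c; rewrite -(piC_sval a) -(piC_sval b) -(piC_sval c) !cadd_piC addrA.
Qed.

Lemma caddC : commutative (@Defs.cadd R).
Proof. by move=> a b; rewrite -(piC_sval a) -(piC_sval b) !cadd_piC addrC. Qed.

Lemma cadd0 : left_id (@Defs.czero R) (@Defs.cadd R).
Proof. by move=> a; rewrite -(piC_sval a) /Defs.czero cadd_piC add0r. Qed.

Lemma caddN : left_inverse (@Defs.czero R) copp (@Defs.cadd R).
Proof. by move=> a; rewrite -(piC_sval a) copp_piC cadd_piC addNr. Qed.

End CircleGroup.

HB.instance Definition _ (R : realType) := Choice.copy (circ R) {x : R | 0 <= x < 1}.
HB.instance Definition _ (R : realType) :=
  GRing.isZmodule.Build (circ R) (@caddA R) (@caddC R) (@cadd0 R) (@caddN R).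
HB.instance Definition _ (R : realType) (k : nat) :=
  GRing.Zmodule.copy (tor R k) ('I_k -> circ R).

Section TorusAction.
Variable R : realType.
Implicit Types (A B : 'M[int]_2) (s : tor R 2).

Lemma piT_add k (v : 'rV[R]_k) (c : tor R k) :
  piT (v + \row_i sval (c i)) = piT v + c.
Proof. by apply: funext => i; rewrite /piT !mxE -cadd_piC piC_sval. Qed.

Lemma actT_mul A B s : actT B (actT A s) = actT (B *m A) s.
Proof.
apply: funext => i; rewrite /actT /=.
rewrite !big_ord_recr !big_ord0 /= !mxE !big_ord_recr !big_ord0 /= !add0r.
set y0 := (_ + _ * sval (s _)); set y1 := (_ + _ * sval (s _)).
set i0 := widen_ord _ _.
apply: (piC_eq_addz (m := - (B i i0 * Num.floor y0 + B i ord_max * Num.floor y1))).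
by rewrite /fracR /y0 /y1 !(intrD, intrM, intrN); ring.
Qed.

Lemma actT1 s : actT 1%:M s = s.
Proof.
apply: funext => i; rewrite /actT -[RHS]piC_sval; congr piC.
rewrite !big_ord_recr big_ord0 /= !mxE add0r.
by case: i => [[|[|//]] lti2]; rewrite /= mul1r mul0r ?addr0 ?add0r;
  congr (sval (s _)); apply: val_inj.
Qed.

Lemma actT_invmxK A s : A \in unitmx -> actT (invmx A) (actT A s) = s.
Proof. by move=> Aunit; rewrite actT_mul mulVmx ?actT1. Qed.

End TorusAction.

Section AddConstant.
Variables (R : numFieldType) (V W : normedModType R).
Implicit Types (f : V -> W) (w : W).

Let diff_quotient_add_cst f w a v :
  (fun h : R => h^-1 *: (((fun x => f x + w) \o shift a) (h *: v) - (f a + w))) =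
  (fun h => h^-1 *: ((f \o shift a) (h *: v) - f a)).
Proof. by apply: funext => h /=; rewrite opprD addrACA subrr addr0. Qed.

Lemma derive_add_cst f w a v : derive (fun x => f x + w) a v = derive f a v.
Proof. by rewrite /derive diff_quotient_add_cst. Qed.

Lemma derivable_add_cst f w a v :
  derivable (fun x => f x + w) a v = derivable f a v.
Proof. by rewrite /derivable diff_quotient_add_cst. Qed.

End AddConstant.

Section Smoothness.
Variable R : realType.

Lemma iterD_add_cst m k (F : 'rV[R]_m -> 'rV[R]_k) w v vs :
  Defs.iterD (v :: vs) (fun x => F x + w) = Defs.iterD (v :: vs) F.
Proof.
elim: vs v => [|v' vs IH] v.
  by apply: funext => x; exact: derive_add_cst.
exact: (congr1 (fun G : 'rV[R]_m -> 'rV[R]_k => fun x => derive G x v) (IH v')).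
Qed.

Lemma smoothR_add_cst m k (F : 'rV[R]_m -> 'rV[R]_k) w :
  smoothR F -> smoothR (fun x => F x + w).
Proof.
move=> smF [|v vs]; last by rewrite iterD_add_cst; exact: smF.
have [contF derF] := smF [::]; split => [x|x v] /=.
  by apply: continuousD; [exact: contF | exact: cst_continuous].
by rewrite derivable_add_cst; exact: derF.
Qed.

Lemma smoothT_add_cst k (g : tor R 2 -> tor R k) (c : tor R k) :
  smoothT g -> smoothT (fun s => g s + c).
Proof.
case=> F [smF liftF]; exists (fun x => F x + \row_i sval (c i)).
by split=> [|x]; [exact: smoothR_add_cst | rewrite liftF piT_add].
Qed.

End Smoothness.

Lemma morphD0 (U V : zmodType) (f : U -> V) :
  {morph f : x y / x + y} -> f 0 = 0.
Proof. by move=> fD; apply: (@addrI _ (f 0)); rewrite -fD !addr0. Qed.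

Section Normaliser.
Variables (R : realType) (n : nat).
Implicit Types (A : 'M[int]_2) (t r : tor R 2) (u : tor R n)
  (gamma : tor R 2 -> tor R n).

Lemma Gmul_translation A t gamma r u :
  Gmul (A, t, gamma) (1%:M, r, fun _ => u) =
  (A, t + r, fun s => gamma (s + r) + u).
Proof.
rewrite /Gmul mulmx1 invmx1 actT1.
by congr (_, _, _); apply: funext => s; rewrite actT1.
Qed.

Lemma translation_Gmul A t gamma r u :
  Gmul (1%:M, r, fun _ => u) (A, t, gamma) =
  (A, actT (invmx A) r + t, fun s => u + gamma s).
Proof. by rewrite /Gmul mul1mx. Qed.

Lemma inK_inN (k : Gcar R n) : inK k -> inN k.
Proof.
case: k => [[A t] gamma] [[detA smg] [/= -> gammaD]].
have Aunit : A \in unitmx by rewrite unitmxE detA unitr1.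
split; first by []; split.
- move=> _ [r [u ->]]; exists (1%:M, actT A r, fun _ => gamma r + u).
  split; first by exists (actT A r), (gamma r + u).
  rewrite Gmul_translation translation_Gmul actT_invmxK // addr0 add0r.
  by congr (_, _, _); apply: funext => s; rewrite gammaD -addrA addrC.
- move=> _ [r' [u' ->]]; set r := actT (invmx A) r'.
  exists (1%:M, r, fun _ => u' - gamma r); split; first by exists r, (u' - gamma r).
  rewrite Gmul_translation translation_Gmul add0r addr0.
  by congr (_, _, _); apply: funext => s; rewrite gammaD addrACA subrr addr0 addrC.
Qed.

Lemma inK_coset_inj (k k' h : Gcar R n) :
  inK k -> inK k' -> inH h -> k = Gmul k' h -> k = k'.
Proof.
case: k k' => [[A t] gamma] [[A' t'] gamma'] kK k'K [r [u ->]].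
rewrite Gmul_translation; move: kK k'K => [_ [/= -> gammaD]] [_ [/= -> gamma'D]].
rewrite add0r; case=> -> <- gammaE.
have u0 : u = 0.
  have := congr1 (fun f => f 0) gammaE.
  by rewrite /= addr0 (morphD0 gammaD) (morphD0 gamma'D) add0r.
by rewrite gammaE u0; congr (_, _, _); apply: funext => s; rewrite !addr0.
Qed.

Lemma inN_translation_add A t gamma :
  inN (A, t, gamma) -> forall r s, gamma (s + r) = gamma r - gamma 0 + gamma s.
Proof.
move=> [_ [normH _]] r s.
have [_ [[r' [u' ->]] gE]] := normH (1%:M, r, fun _ => 0) (ex_intro _ r (ex_intro _ 0 erefl)).
move: gE; rewrite Gmul_translation translation_Gmul; case=> _ gammaE.
have gammaEs s' : gamma (s' + r) = u' + gamma s'.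
  by have := congr1 (fun f => f s') gammaE; rewrite /= addr0.
by rewrite gammaEs -(add0r r) gammaEs addrK.
Qed.

Lemma inN_coset_inK (g : Gcar R n) :
  inN g -> exists k h : Gcar R n, inK k /\ inH h /\ g = Gmul k h.
Proof.
case: g => [[A t] gamma] gN; have [[/= detA smg] _] := gN.
pose delta s := gamma s - gamma 0.
have deltaD : {morph delta : s s' / s + s'}.
  by move=> s s'; rewrite /delta (inN_translation_add gN) [_ - _ + gamma s]addrC addrAC.
exists (A, 0, delta), (1%:M, t, fun _ => gamma 0 - delta t).
split; [|split].
- split; first by split; [exact: detA | exact: smoothT_add_cst smg].
  by split; [by [] | exact: deltaD].
- by exists t, (gamma 0 - delta t).
rewrite Gmul_translation add0r; congr (_, _, _); apply: funext => s.
by rewrite deltaD addrACA subrr addr0 /delta subrK.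
Qed.

End Normaliser.

Theorem mainTheorem9 (R : realType) (n : nat) :
  (* SL_2(ℤ) ⋉ Ť^2 ⊆ N *)
  (forall k : Gcar R n, inK k -> inN k) /\
  (* the composite K ↪ N ↠ N/(𝕋^2×T) is injective: kH = k'H ⇒ k = k' *)
  (forall k k' h : Gcar R n, inK k -> inK k' -> inH h ->
     k = Gmul k' h -> k = k') /\
  (* ... and surjective: every coset gH, g ∈ N, is some kH *)
  (forall g : Gcar R n, inN g ->
     exists k h : Gcar R n, inK k /\ inH h /\ g = Gmul k h).
Proof.
split; [exact: inK_inN | split; [exact: inK_coset_inj | exact: inN_coset_inK]].
Qed.
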